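(* Let $\mathrm{FOV}_{\min}\in(0,\pi/2]$, $L_{\max}>0$ and $A_{\max}>0$. Then the set $\mathcal S=\{(B,\mathrm{FOV}): B>0,\ \mathrm{FOV}\in(0,\pi/2],\ \mathrm{FOV}\ge\mathrm{FOV}_{\min},\ L_{\mathrm{ADR}}(B,\mathrm{FOV})\le L_{\max},\ A_{\mathrm{ADR}}(B,\mathrm{FOV})\le A_{\max}\}$ equals $\{(B,\mathrm{FOV}): B>0,\ \mathrm{FOV}\in(0,\pi/2],\ \mathrm{FOV}\ge f_{\mathrm{FOV}}(B)\}$, where $f_{\mathrm{FOV}}(B)=\max\{\mathrm{FOV}_{\min},\,f_{\mathrm L}^{-1}(B),\,f_{\mathrm A}^{-1}(B)\}$. Consequently, maximising $R(B,\mathrm{FOV})$ over $\mathcal S$ is the same problem as maximising $R(B,\mathrm{FOV})$ subject to the single constraint $\mathrm{FOV}\ge f_{\mathrm{FOV}}(B)$ (with $B>0$, $\mathrm{FOV}\in(0,\pi/2]$).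
   Context: Fix constants: an integer $N_{\mathrm{tier}}\ge1$; an integer $N_{\mathrm{PD}}\ge 1$; $\mathrm{FF}\in(0,1]$; $K_{\mathrm{PD}}>0$; $n_{\mathrm{CPC}}\ge 1$; $P_{\mathrm t}>0$; $w>0$; $R_{\mathrm{PD}}>0$; $\Gamma>0$; $N_0>0$. The design variables are $B>0$ and $\mathrm{FOV}\in(0,\pi/2]$. Write $\theta=\theta_{\mathrm{CPC}}=\mathrm{FOV}/(2N_{\mathrm{tier}}+1)$. Define $D_2(B)=\frac{1}{K_{\mathrm{PD}}B}\sqrt{N_{\mathrm{PD}}/\mathrm{FF}}$, $D_1(B,\mathrm{FOV})=D_2(B)\,\frac{n_{\mathrm{CPC}}}{\sin\theta}$, $P_{\mathrm r}(B,\mathrm{FOV})=\mathrm{FF}\,P_{\mathrm t}\Big(1-\exp\Big(-\frac{D_1(B,\mathrm{FOV})^2}{2w^2}\Big)\Big)$, and the achievable rate $R(B,\mathrm{FOV})=B\log_2\Big(1+\frac{(R_{\mathrm{PD}}P_{\mathrm r}(B,\mathrm{FOV}))^2}{\Gamma N_0 B}\Big)$. Set $K_1=\frac{1}{2K_{\mathrm{PD}}}\sqrt{N_{\mathrm{PD}}/\mathrm{FF}}$ and $K_2=\frac{\pi N_{\mathrm{PD}}n_{\mathrm{CPC}}^2}{4\,\mathrm{FF}\,K_{\mathrm{PD}}^2}$, and define $L_{\mathrm{ADR}}(B,\mathrm{FOV})=\frac{K_1}{B}\cdot\frac{n_{\mathrm{CPC}}+\sin\theta}{\sin\theta\,\tan\theta}$,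 $A_{\mathrm{ADR}}(B,\mathrm{FOV})=\frac{K_2}{B^2\sin^2\theta}\Big(1+\sum_{i=1}^{N_{\mathrm{tier}}}6i\cos(2i\theta)\Big)$. Given $L_{\max},A_{\max}>0$, define for $\mathrm{FOV}\in(0,\pi/2]$ the boundary functions (the value of $B$ at which the respective dimension constraint holds with equality) $f_{\mathrm L}(\mathrm{FOV})=\frac{K_1}{L_{\max}}\cdot\frac{n_{\mathrm{CPC}}+\sin\theta}{\sin\theta\tan\theta}$ and $f_{\mathrm A}(\mathrm{FOV})=\frac{1}{\sin\theta}\sqrt{\frac{K_2}{A_{\max}}\Big(1+\sum_{i=1}^{N_{\mathrm{tier}}}6i\cos(2i\theta)\Big)}$, and their (generalised) inverses $f_{\mathrm L}^{-1}(B)=\inf\{\mathrm{FOV}\in(0,\pi/2]: f_{\mathrm L}(\mathrm{FOV})\le B\}$ and $f_{\mathrm A}^{-1}(B)=\inf\{\mathrm{FOV}\in(0,\pi/2]: f_{\mathrm A}(\mathrm{FOV})\le B\}$, with the convention $\inf\emptyset=+\infty$. *)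

(* concrete classical reals R, with Coquelicot's extended reals Rbar
   (needed because the generalised inverses may equal +infinity). *)
From Stdlib Require Import Reals Lra.
From Coquelicot Require Import Coquelicot.
Open Scope R_scope.

Definition theta_cpc (Ntier : nat) (FOV : R) : R := FOV / (2 * INR Ntier + 1).

Fixpoint tier_sum (Ntier : nat) (th : R) : R :=
  match Ntier with
  | O => 0
  | S n => tier_sum n th + 6 * INR (S n) * cos (2 * INR (S n) * th)
  end.

Definition K1 (NPD FF KPD : R) : R := / (2 * KPD) * sqrt (NPD / FF).
Definition K2 (NPD FF KPD nCPC : R) : R := PI * NPD * nCPC ^ 2 / (4 * FF * KPD ^ 2).

Definition D2 (NPD FF KPD B : R) : R := / (KPD * B) * sqrt (NPD / FF).
Definition D1 (Ntier : nat) (NPD FF KPD nCPC B FOV : R) : R :=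
  D2 NPD FF KPD B * (nCPC / sin (theta_cpc Ntier FOV)).
Definition Pr (Ntier : nat) (NPD FF KPD nCPC Pt w B FOV : R) : R :=
  FF * Pt * (1 - exp (- (D1 Ntier NPD FF KPD nCPC B FOV ^ 2 / (2 * w ^ 2)))).
Definition log2 (x : R) : R := ln x / ln 2.
Definition rate (Ntier : nat) (NPD FF KPD nCPC Pt w RPD Gamma N0 B FOV : R) : R :=
  B * log2 (1 + (RPD * Pr Ntier NPD FF KPD nCPC Pt w B FOV) ^ 2 / (Gamma * N0 * B)).

Definition L_ADR (Ntier : nat) (NPD FF KPD nCPC B FOV : R) : R :=
  let th := theta_cpc Ntier FOV in
  K1 NPD FF KPD / B * ((nCPC + sin th) / (sin th * tan th)).
Definition A_ADR (Ntier : nat) (NPD FF KPD nCPC B FOV : R) : R :=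
  let th := theta_cpc Ntier FOV in
  K2 NPD FF KPD nCPC / (B ^ 2 * sin th ^ 2) * (1 + tier_sum Ntier th).

Definition f_L (Ntier : nat) (NPD FF KPD nCPC Lmax FOV : R) : R :=
  let th := theta_cpc Ntier FOV in
  K1 NPD FF KPD / Lmax * ((nCPC + sin th) / (sin th * tan th)).
Definition f_A (Ntier : nat) (NPD FF KPD nCPC Amax FOV : R) : R :=
  let th := theta_cpc Ntier FOV in
  / sin th * sqrt (K2 NPD FF KPD nCPC / Amax * (1 + tier_sum Ntier th)).

(* generalised inverse: inf {FOV in (0,pi/2] : f FOV <= B}, as an element of Rbar;
   the greatest lower bound (Glb_Rbar) of the empty set is p_infty (see gen_inv_empty). *)
Definition gen_inv (f : R -> R) (B : R) : Rbar :=
  Glb_Rbar (fun FOV => 0 < FOV <= PI / 2 /\ f FOV <= B).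

Lemma gen_inv_empty (f : R -> R) (B : R) :
  (forall FOV, ~ (0 < FOV <= PI / 2 /\ f FOV <= B)) -> gen_inv f B = p_infty.
Proof.
  intros H. unfold gen_inv. apply is_glb_Rbar_unique. split.
  - intros x Hx. exfalso. exact (H x Hx).
  - intros l _. destruct l; simpl; auto.
Qed.

Definition Rbar_max2 (a b : Rbar) : Rbar := if Rbar_le_dec a b then b else a.

(* For fixed FOV both dimension constraints are thresholds on the bandwidth,
   L_ADR <= L_max <-> f_L FOV <= B and A_ADR <= A_max <-> f_A FOV <= B.
   Since theta = FOV / (2 N_tier + 1) <= pi/6 and every 2 i theta <= pi/2, the
   functions f_L and f_A are nonincreasing and continuous on (0, pi/2], so each
   sublevel set {FOV | f FOV <= B} is the interval [f^-1(B), pi/2] (empty when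
   f^-1(B) = +oo), closed at its left end.  Hence the three lower bounds on FOV
   merge into FOV >= f_FOV(B), and the two optimisation problems have the same
   feasible set. *)
From Stdlib Require Import Reals Lra.
From Coquelicot Require Import Coquelicot.
Open Scope R_scope.

Lemma Rdiv_le_iff x y z : 0 < z -> (x / z <= y <-> x <= y * z).
Proof.
  intros Hz. replace x with (x / z * z) at 2 by (field; lra).
  split; intros H.
  - apply Rmult_le_compat_r; lra.
  - apply Rmult_le_reg_r with z; lra.
Qed.

Lemma Rdiv_le_swap x y z : 0 < y -> 0 < z -> (x / y <= z <-> x / z <= y).
Proof. intros Hy Hz. rewrite !Rdiv_le_iff by assumption. now rewrite Rmult_comm. Qed.

Lemma sqrt_le_iff x y : 0 <= x -> 0 <= y -> (sqrt x <= y <-> x <= y ^ 2).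
Proof.
  intros Hx Hy. split; intros H.
  - apply sqrt_le_0; [assumption | nra |]. now rewrite sqrt_pow2.
  - rewrite <- (sqrt_pow2 y) by assumption. apply sqrt_le_1; nra.
Qed.

Lemma Rbar_max2_le a b c : Rbar_le (Rbar_max2 a b) c <-> Rbar_le a c /\ Rbar_le b c.
Proof.
  unfold Rbar_max2. destruct (Rbar_le_dec a b) as [Hab | Hab]; split.
  - intros Hb. split; [eapply Rbar_le_trans |]; eassumption.
  - now intros [_ Hb].
  - intros Ha. split; [| eapply Rbar_le_trans; [| exact Ha]]; try assumption.
    now apply Rbar_lt_le, Rbar_not_le_lt.
  - now intros [Ha _].
Qed.

Lemma gen_inv_le_iff (f : R -> R) B x :
  (forall a b, 0 < a -> a <= b -> b <= PI / 2 -> f b <= f a) ->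
  continuity_pt f x -> 0 < x <= PI / 2 ->
  (Rbar_le (gen_inv f B) (Finite x) <-> f x <= B).
Proof.
  intros Hanti Hcont Hx.
  destruct (Glb_Rbar_correct (fun y => 0 < y <= PI / 2 /\ f y <= B)) as [Hlb Hglb].
  unfold gen_inv. split; [| intros HfB; now apply Hlb].
  intros Hle. destruct (Rle_dec (f x) B) as [| HfB]; [assumption | exfalso].
  apply Rnot_le_lt in HfB.
  destruct (Hcont (f x - B)) as [alp [Halp Hnear]]; [lra |].
  (* f stays above B on (0, x] by antitonicity and on [x, x + alp) by continuity,
     so x + alp / 2 bounds the sublevel set from below. *)
  assert (Hbound : is_lb_Rbar (fun y => 0 < y <= PI / 2 /\ f y <= B)
                     (Finite (x + alp / 2))).
  { intros y [Hy Hfy]. simpl.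
    destruct (Rle_dec y x) as [Hyx | Hyx].
    { assert (f x <= f y) by (apply Hanti; lra). lra. }
    destruct (Rle_dec (x + alp / 2) y) as [| Hyalp]; [assumption | exfalso].
    assert (Hdist : R_dist (f y) (f x) < f x - B).
    { apply Hnear. split; [split; [exact I | lra] |].
      change (R_dist y x < alp). unfold R_dist. rewrite Rabs_right; lra. }
    unfold R_dist in Hdist. apply Rabs_def2 in Hdist. lra. }
  pose proof (Rbar_le_trans _ _ _ (Hglb _ Hbound) Hle) as Hcontra. simpl in Hcontra. lra.
Qed.

Lemma is_max_on_ext {A B : Type} (S T : A -> B -> Prop) (g : A -> B -> R) :
  (forall a b, S a b <-> T a b) ->
  forall a b,
    (S a b /\ forall a' b', S a' b' -> g a' b' <= g a b) <->
    (T a b /\ forall a' b', T a' b' -> g a' b' <= g a b).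
Proof.
  intros HST a b. split; intros [Hab Hmax]; split; try apply HST; try assumption;
    intros a' b' H'; apply Hmax, HST, H'.
Qed.

Lemma tier_sum_nonneg n t : 0 <= t -> 2 * INR n * t <= PI / 2 -> 0 <= tier_sum n t.
Proof.
  intros Ht. induction n as [| n IH]; intros Hn; cbn [tier_sum]; [lra |].
  pose proof (pos_INR n). pose proof (S_INR n). pose proof PI_RGT_0.
  assert (0 <= cos (2 * INR (S n) * t)) by (apply cos_ge_0; nra).
  assert (0 <= tier_sum n t) by (apply IH; nra).
  nra.
Qed.

Lemma tier_sum_antitone n a b :
  0 <= a -> a <= b -> 2 * INR n * b <= PI / 2 -> tier_sum n b <= tier_sum n a.
Proof.
  intros Ha Hab. induction n as [| n IH]; intros Hn; cbn [tier_sum]; [lra |].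
  pose proof (pos_INR n). pose proof (S_INR n). pose proof PI_RGT_0.
  assert (cos (2 * INR (S n) * b) <= cos (2 * INR (S n) * a)) by (apply cos_decr_1; nra).
  assert (tier_sum n b <= tier_sum n a) by (apply IH; nra).
  nra.
Qed.

Lemma tier_sum_ex_derive n t : ex_derive (tier_sum n) t.
Proof.
  induction n as [| n IH]; cbn [tier_sum].
  - apply ex_derive_const.
  - apply (ex_derive_plus (tier_sum n)); [exact IH | auto_derive; auto].
Qed.

Lemma cpc_ratio_antitone n a b : 0 <= n -> 0 < a -> a <= b -> b < PI / 2 ->
  (n + sin b) / (sin b * tan b) <= (n + sin a) / (sin a * tan a).
Proof.
  intros Hn Ha Hab Hb. pose proof PI_RGT_0.
  assert (Hsa : 0 < sin a) by (apply sin_gt_0; lra).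
  assert (Hs : sin a <= sin b) by (apply sin_incr_1; lra).
  assert (Hta : 0 < tan a) by (apply tan_gt_0; lra).
  assert (Ht : tan a <= tan b).
  { destruct (Rle_lt_or_eq_dec _ _ Hab) as [Hlt | ->]; [| lra].
    left. apply tan_increasing; lra. }
  replace ((n + sin b) / (sin b * tan b)) with (n * / (sin b * tan b) + / tan b)
    by (field; split; lra).
  replace ((n + sin a) / (sin a * tan a)) with (n * / (sin a * tan a) + / tan a)
    by (field; split; lra).
  apply Rplus_le_compat; [apply Rmult_le_compat_l; [lra |] |];
    apply Rinv_le_contravar; nra.
Qed.

Section Angle.

Variable Ntier : nat.
Hypothesis HNtier : (1 <= Ntier)%nat.

Lemma theta_cpc_le a b : a <= b -> theta_cpc Ntier a <= theta_cpc Ntier b.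
Proof.
  intros Hab. pose proof (pos_INR Ntier). unfold theta_cpc.
  apply Rmult_le_compat_r; [left; apply Rinv_0_lt_compat |]; lra.
Qed.

Lemma theta_cpc_bounds x : 0 < x <= PI / 2 ->
  0 < theta_cpc Ntier x <= PI / 6 /\ 2 * INR Ntier * theta_cpc Ntier x <= PI / 2.
Proof.
  intros Hx. assert (HN : 1 <= INR Ntier) by now apply (le_INR 1).
  unfold theta_cpc.
  assert (0 < x / (2 * INR Ntier + 1)) by (apply Rdiv_lt_0_compat; lra).
  assert (x / (2 * INR Ntier + 1) * (2 * INR Ntier + 1) = x) by (field; lra).
  nra.
Qed.

End Angle.

Section Constraints.

Variables (Ntier : nat) (NPD FF KPD nCPC Lmax Amax : R).
Hypotheses (HNtier : (1 <= Ntier)%nat) (HNPD : 0 < NPD) (HFF : 0 < FF)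
  (HKPD : 0 < KPD) (HnCPC : 0 < nCPC) (HLmax : 0 < Lmax) (HAmax : 0 < Amax).

Let fL := f_L Ntier NPD FF KPD nCPC Lmax.
Let fA := f_A Ntier NPD FF KPD nCPC Amax.

Lemma K1_nonneg : 0 <= K1 NPD FF KPD.
Proof.
  unfold K1. apply Rmult_le_pos; [left; apply Rinv_0_lt_compat; lra | apply sqrt_pos].
Qed.

Lemma K2_pos : 0 < K2 NPD FF KPD nCPC.
Proof.
  unfold K2. pose proof PI_RGT_0. apply Rdiv_lt_0_compat.
  - apply Rmult_lt_0_compat; [apply Rmult_lt_0_compat |]; nra.
  - apply Rmult_lt_0_compat; nra.
Qed.

Lemma tier_factor_pos x : 0 < x <= PI / 2 ->
  0 < K2 NPD FF KPD nCPC / Amax * (1 + tier_sum Ntier (theta_cpc Ntier x)).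
Proof.
  intros Hx. destruct (theta_cpc_bounds Ntier HNtier x Hx) as [[Hth _] Htier].
  pose proof (tier_sum_nonneg Ntier _ (Rlt_le _ _ Hth) Htier).
  pose proof K2_pos. apply Rmult_lt_0_compat; [apply Rdiv_lt_0_compat |]; lra.
Qed.

Lemma f_L_antitone a b : 0 < a -> a <= b -> b <= PI / 2 -> fL b <= fL a.
Proof.
  intros Ha Hab Hb. unfold fL, f_L.
  destruct (theta_cpc_bounds Ntier HNtier a) as [[Hta _] _]; [lra |].
  destruct (theta_cpc_bounds Ntier HNtier b) as [[_ Htb] _]; [lra |].
  pose proof PI_RGT_0. pose proof K1_nonneg.
  apply Rmult_le_compat_l; [apply Rmult_le_pos; [| left; apply Rinv_0_lt_compat]; lra |].
  apply cpc_ratio_antitone; [lra | lra | now apply theta_cpc_le | lra].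
Qed.

Lemma f_A_antitone a b : 0 < a -> a <= b -> b <= PI / 2 -> fA b <= fA a.
Proof.
  intros Ha Hab Hb. unfold fA, f_A.
  destruct (theta_cpc_bounds Ntier HNtier a) as [[Hta _] _]; [lra |].
  destruct (theta_cpc_bounds Ntier HNtier b) as [[_ Htb] Htierb]; [lra |].
  pose proof (theta_cpc_le Ntier a b Hab). pose proof PI_RGT_0. pose proof K2_pos.
  assert (Hsa : 0 < sin (theta_cpc Ntier a)) by (apply sin_gt_0; lra).
  assert (Hsab : sin (theta_cpc Ntier a) <= sin (theta_cpc Ntier b))
    by (apply sin_incr_1; lra).
  apply Rmult_le_compat; [left; apply Rinv_0_lt_compat; lra | apply sqrt_pos | |].
  - now apply Rinv_le_contravar.
  - apply sqrt_le_1_alt, Rmult_le_compat_l; [left; apply Rdiv_lt_0_compat; lra |].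
    apply Rplus_le_compat_l, tier_sum_antitone; lra.
Qed.

Lemma f_L_continuous x : 0 < x <= PI / 2 -> continuity_pt fL x.
Proof.
  intros Hx. apply continuity_pt_filterlim.
  apply (ex_derive_continuous (K := R_AbsRing) (V := R_NormedModule)).
  destruct (theta_cpc_bounds Ntier HNtier x Hx) as [[Hth Hth6] _].
  pose proof PI_RGT_0.
  assert (0 < sin (theta_cpc Ntier x)) by (apply sin_gt_0; lra).
  assert (0 < cos (theta_cpc Ntier x)) by (apply cos_gt_0; lra).
  assert (0 < tan (theta_cpc Ntier x)) by (apply tan_gt_0; lra).
  unfold fL, f_L, tan in *. unfold theta_cpc in *. auto_derive.
  repeat split; try lra. apply Rmult_integral_contrapositive; split; lra.
Qed.

Lemma f_A_continuous x : 0 < x <= PI / 2 -> continuity_pt fA x.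
Proof.
  intros Hx. apply continuity_pt_filterlim.
  apply (ex_derive_continuous (K := R_AbsRing) (V := R_NormedModule)).
  destruct (theta_cpc_bounds Ntier HNtier x Hx) as [[Hth Hth6] _].
  pose proof PI_RGT_0. pose proof (tier_factor_pos x Hx).
  assert (0 < sin (theta_cpc Ntier x)) by (apply sin_gt_0; lra).
  unfold fA, f_A. unfold theta_cpc in *. auto_derive.
  repeat split; try lra. apply tier_sum_ex_derive.
Qed.

Lemma L_ADR_le_iff B x : 0 < B -> L_ADR Ntier NPD FF KPD nCPC B x <= Lmax <-> fL x <= B.
Proof.
  intros HB. unfold L_ADR, fL, f_L.
  set (g := (nCPC + _) / _).
  replace (K1 NPD FF KPD / B * g) with (K1 NPD FF KPD * g / B) by (field; lra).
  replace (K1 NPD FF KPD / Lmax * g) with (K1 NPD FF KPD * g / Lmax) by (field; lra).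
  now apply Rdiv_le_swap.
Qed.

Lemma A_ADR_le_iff B x : 0 < B -> 0 < x <= PI / 2 ->
  A_ADR Ntier NPD FF KPD nCPC B x <= Amax <-> fA x <= B.
Proof.
  intros HB Hx. unfold A_ADR, fA, f_A.
  destruct (theta_cpc_bounds Ntier HNtier x Hx) as [[Hth Hth6] _].
  pose proof PI_RGT_0. pose proof (tier_factor_pos x Hx).
  assert (Hs : 0 < sin (theta_cpc Ntier x)) by (apply sin_gt_0; lra).
  set (s := sin _) in *. set (h := 1 + _) in *. set (K := K2 NPD FF KPD nCPC) in *.
  replace (K / (B ^ 2 * s ^ 2) * h) with (K * h / (B * s) ^ 2) by (field; lra).
  assert (HBs : 0 < B * s) by nra.
  rewrite Rdiv_le_swap by (try apply pow_lt; assumption).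
  replace (K * h / Amax) with (K / Amax * h) by (field; lra).
  rewrite (Rmult_comm (/ s)).
  change (K / Amax * h <= (B * s) ^ 2 <-> sqrt (K / Amax * h) / s <= B).
  rewrite Rdiv_le_iff, sqrt_le_iff by lra.
  reflexivity.
Qed.

Lemma L_ADR_le_iff_gen_inv B x : 0 < B -> 0 < x <= PI / 2 ->
  L_ADR Ntier NPD FF KPD nCPC B x <= Lmax <-> Rbar_le (gen_inv fL B) (Finite x).
Proof.
  intros HB Hx. rewrite L_ADR_le_iff by assumption. symmetry.
  apply gen_inv_le_iff; [exact f_L_antitone | now apply f_L_continuous | exact Hx].
Qed.

Lemma A_ADR_le_iff_gen_inv B x : 0 < B -> 0 < x <= PI / 2 ->
  A_ADR Ntier NPD FF KPD nCPC B x <= Amax <-> Rbar_le (gen_inv fA B) (Finite x).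
Proof.
  intros HB Hx. rewrite A_ADR_le_iff by assumption. symmetry.
  apply gen_inv_le_iff; [exact f_A_antitone | now apply f_A_continuous | exact Hx].
Qed.

End Constraints.

Theorem mainTheorem6
  (Ntier : nat) (NPD FF KPD nCPC Pt w RPD Gamma N0 FOVmin Lmax Amax : R)
  (HNtier : (1 <= Ntier)%nat) (HNPD : 1 <= NPD) (HNPDint : exists k : nat, NPD = INR k)
  (HFF : 0 < FF <= 1) (HKPD : 0 < KPD) (HnCPC : 1 <= nCPC) (HPt : 0 < Pt) (Hw : 0 < w)
  (HRPD : 0 < RPD) (HGamma : 0 < Gamma) (HN0 : 0 < N0)
  (HFOVmin : 0 < FOVmin <= PI / 2) (HLmax : 0 < Lmax) (HAmax : 0 < Amax) :
  let inS := fun B FOV =>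
    0 < B /\ 0 < FOV <= PI / 2 /\ FOVmin <= FOV /\
    L_ADR Ntier NPD FF KPD nCPC B FOV <= Lmax /\
    A_ADR Ntier NPD FF KPD nCPC B FOV <= Amax in
  let f_FOV := fun B =>
    Rbar_max2 (Finite FOVmin)
      (Rbar_max2 (gen_inv (f_L Ntier NPD FF KPD nCPC Lmax) B)
                 (gen_inv (f_A Ntier NPD FF KPD nCPC Amax) B)) in
  let inT := fun B FOV =>
    0 < B /\ 0 < FOV <= PI / 2 /\ Rbar_le (f_FOV B) (Finite FOV) in
  let Rt := rate Ntier NPD FF KPD nCPC Pt w RPD Gamma N0 in
  (forall B FOV, inS B FOV <-> inT B FOV) /\
  (forall B FOV,
     (inS B FOV /\ forall B' FOV', inS B' FOV' -> Rt B' FOV' <= Rt B FOV) <->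
     (inT B FOV /\ forall B' FOV', inT B' FOV' -> Rt B' FOV' <= Rt B FOV)).
Proof.
  intros inS f_FOV inT Rt.
  assert (HNPD0 : 0 < NPD) by lra. assert (HFF0 : 0 < FF) by lra.
  assert (HnCPC0 : 0 < nCPC) by lra.
  assert (HST : forall B FOV, inS B FOV <-> inT B FOV).
  { intros B FOV. unfold inS, inT, f_FOV. rewrite !Rbar_max2_le. simpl.
    split; intros (HB & Hx & Hmin & HL & HA); do 3 (split; [assumption |]).
    - split; [now apply L_ADR_le_iff_gen_inv | now apply A_ADR_le_iff_gen_inv].
    - split; [now apply (L_ADR_le_iff_gen_inv Ntier NPD FF KPD nCPC)
             | now apply (A_ADR_le_iff_gen_inv Ntier NPD FF KPD nCPC)]. }
  split; [exact HST | exact (is_max_on_ext inS inT Rt HST)].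
Qed.
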